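(* Let $(X,\mathcal{C},O)$ be a simple compatibility scenario with $O=\{0,1\}$ whose compatibility graph contains at least one cycle, and let $\mathrm{B}=\{p_C\}$ be a nondisturbing behavior for it. Then $\mathrm{B}$ is logically contextual if and only if there exist a cycle $N_1,N_2,\dots,N_m$ ($m\geq 3$) of the compatibility graph, an index $1\leq i\leq m$, $(a,b)\in\{0,1\}^2$ and $(\alpha_1,\dots,\alpha_{m-2})\in\{0,1\}^{m-2}$ such that, writing $q_r(x,y)$ for the probability, under $p_{\{N_r,N_{r+1}\}}$, that $N_r=x$ and $N_{r+1}=y$ (indices modulo $m$), $q_i(a,b)>0$, $q_{i+1}(b,\alpha_1)=0$, $q_{i+j}(\lnot\alpha_{j-1},\alpha_j)=0$ for $2\leq j\leq m-2$, and $q_{i+m-1}(\lnot\alpha_{m-2},a)=0$, where $\lnot x=1-x$.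
   Context: A compatibility scenario is a triple $(X,\mathcal{C},O)$ with $X,O$ finite sets and $\mathcal{C}$ a family of subsets of $X$ (contexts) covering $X$, none properly contained in another. It is simple if every context has at most two elements; its compatibility graph has vertex set $X$ and an edge $\{M,M'\}$ for each two-element context. A cycle is a sequence of distinct vertices $N_1,\dots,N_m$, $m\geq3$, with $\{N_r,N_{r+1}\}\in\mathcal{C}$ for all $r$ (indices mod $m$). For $\Omega\subseteq X$, $O^\Omega$ is the set of functions $\Omega\to O$. A behavior is a family of probability distributions $p_C$ on $O^C$, $C\in\mathcal{C}$; it is nondisturbing if for all $C,C'$ the marginals of $p_C$ and $p_{C'}$ on $C\cap C'$ coincide. Let $\bar p_C(s)=1$ if $p_C(s)>0$, else $0$. The behavior is logically noncontextual if there is $\bar p:O^X\to\{0,1\}$ with $\max\{\bar p(t):t\in O^X, t|_C=s\}=\bar p_C(s)$ for all $C\in\mathcal{C}$, $s\in O^C$; otherwise logically contextual. *)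

From mathcomp Require Import all_boot all_order all_algebra.
Set Implicit Arguments. Unset Strict Implicit. Unset Printing Implicit Defensive.
Import Order.TTheory GRing.Theory Num.Theory.
Local Open Scope ring_scope.

(* Outcome set O = {0,1} is encoded as bool (false = 0, true = 1).
   An assignment s in O^C (C : {set X}) is encoded as its canonical
   extension to a total function X -> bool which is [false] outside C. *)

Section Scenario.
Variable X : finType.

Definition restr (D : {set X}) (s : {ffun X -> bool}) : {ffun X -> bool} :=
  [ffun x => if x \in D then s x else false].

Definition sections (C : {set X}) : {set {ffun X -> bool}} :=
  [set s : {ffun X -> bool} | [forall x, (x \notin C) ==> ~~ s x]].

Definition compat_scenario (ctx : {set {set X}}) : Prop :=
  (forall x : X, exists2 C, C \in ctx & x \in C) /\
  (forall C C', C \in ctx -> C' \in ctx -> ~~ (C \proper C')).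

Definition simple_scenario (ctx : {set {set X}}) : Prop :=
  forall C, C \in ctx -> (#|C| <= 2)%N.

(* A cycle N_0, ..., N_{m-1} (0-based, indices mod m) in the compatibility
   graph: distinct vertices, m >= 3, and {N_r, N_{r+1 mod m}} a context. *)
Definition is_cycle (ctx : {set {set X}}) (m : nat) (N : nat -> X) : Prop :=
  (3 <= m)%N /\
  (forall r1 r2, (r1 < m)%N -> (r2 < m)%N -> N r1 = N r2 -> r1 = r2) /\
  (forall r, (r < m)%N -> [set N r; N ((r + 1) %% m)%N] \in ctx).

Variable R : realFieldType.

Definition behavior (ctx : {set {set X}})
    (p : {set X} -> {ffun X -> bool} -> R) : Prop :=
  forall C, C \in ctx ->
    (forall s, s \in sections C -> 0 <= p C s) /\
    \sum_(s in sections C) p C s = 1.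

Definition marginal (p : {set X} -> {ffun X -> bool} -> R)
    (C D : {set X}) (t : {ffun X -> bool}) : R :=
  \sum_(s in sections C | restr D s == t) p C s.

Definition nondisturbing (ctx : {set {set X}})
    (p : {set X} -> {ffun X -> bool} -> R) : Prop :=
  forall C C', C \in ctx -> C' \in ctx ->
    forall t, t \in sections (C :&: C') ->
      marginal p C (C :&: C') t = marginal p C' (C :&: C') t.

(* Logical noncontextuality: there is pbar : O^X -> {0,1} with
   max { pbar t | t|_C = s } = bar p_C (s) for all contexts C, s in O^C. *)
Definition logically_noncontextual (ctx : {set {set X}})
    (p : {set X} -> {ffun X -> bool} -> R) : Prop :=
  exists pbar : {ffun X -> bool} -> bool,
    forall C, C \in ctx -> forall s, s \in sections C ->
      [exists t, pbar t && (restr C t == s)] = (0 < p C s).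

Definition logically_contextual (ctx : {set {set X}})
    (p : {set X} -> {ffun X -> bool} -> R) : Prop :=
  ~ logically_noncontextual ctx p.

Definition qprob (p : {set X} -> {ffun X -> bool} -> R) (m : nat)
    (N : nat -> X) (r : nat) (x y : bool) : R :=
  let u := N (r %% m)%N in let v := N ((r + 1) %% m)%N in
  \sum_(s in sections [set u; v] | (s u == x) && (s v == y)) p [set u; v] s.

End Scenario.

From mathcomp Require Import all_boot all_order all_algebra.
From mathcomp Require Import zify.
From Stdlib Require Import Classical.
Set Implicit Arguments. Unset Strict Implicit. Unset Printing Implicit Defensive.
Import Order.TTheory GRing.Theory Num.Theory.
Local Open Scope ring_scope.

(* Read a literal (x, c) as "x takes value c", and say that (x, c) forces
   (y, d) when {x, y} is a context in which x = c, y = ~~ d has probability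
   zero.  Nondisturbance makes the support of a single literal independent of
   the context, and support propagates along forcings.  The pattern of the
   theorem is a forcing chain around a cycle that refutes a possible value of
   its closing edge, so it rules out any global assignment.  Conversely, a
   shortest such refutation is always a simple cycle, so without the pattern
   no supported literal forces its own negation; logical noncontextuality is
   then a satisfiable 2-SAT instance, and the usual 2-SAT extension of a
   possible section of any context gives a global assignment that is possible
   in every context. *)

Lemma psumr_gt0P (R : numDomainType) (I : finType) (P : pred I) (F : I -> R) :
  (forall i, P i -> 0 <= F i) ->
  reflect (exists2 i, P i & 0 < F i) (0 < \sum_(i | P i) F i).
Proof.
move=> F_ge0; rewrite lt_def sumr_ge0 // andbT psumr_neq0 //.
apply: (iffP hasP) => [[i _ /andP[]] | [i Pi F_gt0]]; first by exists i.
by exists i; rewrite ?mem_index_enum ?Pi.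
Qed.

Lemma connect_forward (T : finType) (e : rel T) (P : T -> Prop) :
  (forall x y, P x -> e x y -> P y) -> forall a b, connect e a b -> P a -> P b.
Proof.
move=> Pe a b /connectP[q e_q ->].
by elim: q a e_q => //= c q IHq a /andP[e_ac e_q] Pa; apply: IHq e_q (Pe _ _ Pa e_ac).
Qed.

Section Scenario.
Variables (R : realFieldType) (X : finType) (ctx : {set {set X}}).
Variable p : {set X} -> {ffun X -> bool} -> R.
Hypotheses (ctx_simple : simple_scenario ctx) (p_behavior : behavior ctx p)
  (p_nondisturbing : nondisturbing ctx p).

Lemma sections_out (C : {set X}) s x : s \in sections C -> x \notin C -> s x = false.
Proof. by rewrite inE => /forallP/(_ x)/implyP sCx /sCx/negbTE. Qed.

Lemma restr_sections (C : {set X}) (t : {ffun X -> bool}) :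
  restr C t \in sections C.
Proof. by rewrite inE; apply/forallP => x; apply/implyP; rewrite ffunE => /negbTE->. Qed.

Lemma restr_section (C : {set X}) (s t : {ffun X -> bool}) :
  s \in sections C -> {in C, forall x, s x = t x} -> restr C t = s.
Proof.
move=> sC st; apply/ffunP => x; rewrite ffunE.
by case: ifPn => [/st -> // | /(sections_out sC) ->].
Qed.

Lemma p_ge0 (C : {set X}) s : C \in ctx -> s \in sections C -> 0 <= p C s.
Proof. by move=> /p_behavior[+ _]; apply. Qed.

Lemma exists_section_gt0 (C : {set X}) : C \in ctx ->
  exists2 s, s \in sections C & 0 < p C s.
Proof.
move=> Cctx; have [_ sum1] := p_behavior Cctx.
have F_ge0 s : s \in sections C -> 0 <= p C s by exact: p_ge0.
by apply/(psumr_gt0P F_ge0); rewrite sum1 ltr01.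
Qed.

Definition edge_prob (u v : X) (x y : bool) : R :=
  \sum_(s in sections [set u; v] | (s u == x) && (s v == y)) p [set u; v] s.

Lemma qprobE m N r :
  qprob p m N r =2 edge_prob (N (r %% m)%N) (N ((r + 1) %% m)%N).
Proof. by []. Qed.

Lemma edge_probC u v x y : edge_prob u v x y = edge_prob v u y x.
Proof.
rewrite /edge_prob setUC.
by apply: eq_bigl => s; rewrite [(_ == x) && _]andbC.
Qed.

Section Edge.
Variables (u v : X).
Hypothesis uv_ctx : [set u; v] \in ctx.

Lemma edge_prob_ge0 x y : 0 <= edge_prob u v x y.
Proof. by apply: sumr_ge0 => s /andP[/(p_ge0 uv_ctx)]. Qed.

Lemma edge_prob_gt0P x y :
  reflect (exists s, [/\ s \in sections [set u; v], s u = x, s v = y & 0 < p [set u; v] s])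
          (0 < edge_prob u v x y).
Proof.
have F_ge0 s : (s \in sections [set u; v]) && ((s u == x) && (s v == y)) ->
    0 <= p [set u; v] s by case/andP=> /(p_ge0 uv_ctx).
apply: (iffP (psumr_gt0P F_ge0)) => [|[s [sC <- <- ps_gt0]]].
  by case=> s /andP[sC /andP[/eqP <- /eqP <-]] ps_gt0; exists s.
by exists s; rewrite ?sC ?eqxx.
Qed.

Lemma edge_prob_section_gt0 s : s \in sections [set u; v] -> 0 < p [set u; v] s ->
  0 < edge_prob u v (s u) (s v).
Proof. by move=> sC ps_gt0; apply/edge_prob_gt0P; exists s. Qed.

End Edge.

Definition supported (l : X * bool) : Prop :=
  forall C, C \in ctx -> l.1 \in C ->
    exists s, [/\ s \in sections C, s l.1 = l.2 & 0 < p C s].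

Lemma supported_section (C : {set X}) s x : C \in ctx -> x \in C ->
  s \in sections C -> 0 < p C s -> supported (x, s x).
Proof.
move=> Cctx xC sC ps_gt0 C' C'ctx /= xC'; set D := C :&: C'.
have F_ge0 (E : {set X}) : E \in ctx ->
    forall s', (s' \in sections E) && (restr D s' == restr D s) -> 0 <= p E s'.
  by move=> Ectx s' /andP[/(p_ge0 Ectx)].
have /(psumr_gt0P (F_ge0 _ C'ctx)) [s' /andP[s'C' /eqP s'D] ps'_gt0] :
    0 < marginal p C' D (restr D s).
  rewrite -p_nondisturbing ?restr_sections //.
  by apply/(psumr_gt0P (F_ge0 _ Cctx)); exists s; rewrite ?sC ?eqxx.
exists s'; split => //.
by have := congr1 (fun t : {ffun X -> bool} => t x) s'D; rewrite !ffunE inE xC xC'.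
Qed.

Lemma exists_supported z : exists c, supported (z, c).
Proof.
have [[C /andP[Cctx zC]] | no_ctx] := pickP [pred C | (C \in ctx) && (z \in C)].
  have [s sC ps_gt0] := exists_section_gt0 Cctx.
  by exists (s z); apply: supported_section ps_gt0.
by exists true => C Cctx zC; move: (no_ctx C); rewrite /= Cctx zC.
Qed.

Definition negl (l : X * bool) : X * bool := (l.1, ~~ l.2).

Lemma neglK : involutive negl.
Proof. by case=> x c; rewrite /negl negbK. Qed.

Definition forces (l l' : X * bool) : bool :=
  [&& l.1 != l'.1, [set l.1; l'.1] \in ctx & edge_prob l.1 l'.1 l.2 (~~ l'.2) == 0].

Lemma forces_negl l l' : forces (negl l') (negl l) = forces l l'.
Proof. by rewrite /forces /= negbK eq_sym setUC edge_probC. Qed.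

Lemma supported_edge_prob_gt0 u v c d : [set u; v] \in ctx -> supported (v, d) ->
  edge_prob u v c d = 0 -> 0 < edge_prob u v (~~ c) d.
Proof.
move=> uv_ctx /(_ _ uv_ctx (set22 u v)) [s [sC /= sv ps_gt0]] uv0.
have := edge_prob_section_gt0 uv_ctx sC ps_gt0; rewrite sv.
by case: (s u) uv0; case: c => // ->; rewrite ltxx.
Qed.

Lemma supported_forces l l' : supported l -> forces l l' -> supported l'.
Proof.
case: l l' => [x c] [y d] supp_xc /and3P[/= _ xy_ctx /eqP xy0].
have [s [sC /= sx ps_gt0]] := supp_xc _ xy_ctx (set21 x y).
suff <- : s y = d by apply: supported_section ps_gt0; rewrite ?set22.
have := edge_prob_section_gt0 xy_ctx sC ps_gt0; rewrite sx.
by case: (s y) xy0; case: d => // ->; rewrite ltxx.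
Qed.

Lemma supported_connect a b : connect forces a b -> supported a -> supported b.
Proof. exact: (@connect_forward _ forces supported supported_forces). Qed.

Lemma connect_negl a b : connect forces a b -> connect forces (negl b) (negl a).
Proof.
move=> ab; apply: (@connect_forward _ _ (fun b => connect forces (negl b) (negl a)) _ a b ab).
  by move=> x y xa xy; apply: connect_trans xa; apply: connect1; rewrite forces_negl.
exact: connect0.
Qed.

Definition forcing_walk (L : nat -> X * bool) (n : nat) : Prop :=
  forall r, (r < n)%N -> forces (L r) (L r.+1).

Lemma connect_walk a b : connect forces a b ->
  exists n L, [/\ L 0%N = a, L n = b & forcing_walk L n].
Proof.
case/connectP => q walk_q ->; exists (size q), (nth a (a :: q)); split => //.
  by rewrite -[in nth _ _ (size q)]/(size (a :: q)).-1 nth_last.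
by move=> r; apply: (pathP a walk_q r).
Qed.

Lemma supported_walk L n r : forcing_walk L n -> supported (L 0%N) ->
  (r <= n)%N -> supported (L r).
Proof.
move=> wL supp_L0; elim: r => // r IHr le_rn.
exact: supported_forces (IHr (ltnW le_rn)) (wL r le_rn).
Qed.

(* With pairwise distinct variables, this is the pattern of the theorem read
   along the cycle (L 0).1, ..., (L n).1, whose closing edge is the positive one. *)
Definition witness_walk (L : nat -> X * bool) (n : nat) : Prop :=
  [/\ forcing_walk L n, (L n).1 != (L 0%N).1, [set (L n).1; (L 0%N).1] \in ctx &
      0 < edge_prob (L n).1 (L 0%N).1 (~~ (L n).2) (L 0%N).2].

Lemma witness_walk_supported L n : witness_walk L n -> supported (L 0%N).
Proof.
case=> _ _ e_ctx /(edge_prob_gt0P e_ctx) [s [sC _ sL0 ps_gt0]].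
by have := supported_section e_ctx (set22 _ _) sC ps_gt0; rewrite sL0 -surjective_pairing.
Qed.

Lemma loop_witness_walk L n : supported (L 0%N) -> forcing_walk L n ->
  L n = negl (L 0%N) -> witness_walk L n.-1.
Proof.
case: n => [|n] supp_L0 wL Ln; first by case: (L 0%N) Ln => x [].
have := wL n (ltnSn n); rewrite Ln /forces /= negbK => /and3P[neq e_ctx /eqP e0].
case: n wL e_ctx e0 {Ln} neq => [|n] wL e_ctx e0 neq; first by rewrite eqxx in neq.
split=> //; first by move=> r lt_rn; apply: wL; apply: ltnW.
by apply: supported_edge_prob_gt0; rewrite // -surjective_pairing.
Qed.

Definition cycle_witness : Prop :=
  exists (m : nat) (N : nat -> X) (i : nat) (a b : bool) (alpha : nat -> bool),
    [/\ is_cycle ctx m N, (i < m)%N &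
       [/\ 0 < qprob p m N i a b,
        qprob p m N (i + 1) b (alpha 1%N) = 0,
        (forall j, (2 <= j <= m - 2)%N ->
           qprob p m N (i + j) (~~ alpha (j - 1)%N) (alpha j) = 0) &
        qprob p m N (i + m - 1) (~~ alpha (m - 2)%N) a = 0]].

Lemma qprob_wrap m N k x y : (k.+1 < m)%N ->
  qprob p m N (k + m) x y = edge_prob (N k) (N k.+1) x y.
Proof. by move=> lt_km; rewrite qprobE addnAC !modnDr addn1 !modn_small // ltnW. Qed.

Lemma witness_walk_cycle_distinct L n : witness_walk L n ->
  (forall r1 r2, (r1 <= n)%N -> (r2 <= n)%N -> (L r1).1 = (L r2).1 -> r1 = r2) ->
  cycle_witness.
Proof.
case=> wL neq e_ctx e_gt0 L_inj.
have walk_edge r : (r < n)%N -> edge_prob (L r).1 (L r.+1).1 (L r).2 (~~ (L r.+1).2) = 0.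
  by move=> /wL /and3P[_ _ /eqP].
have ge2_n : (2 <= n)%N.
  case: n wL neq e_ctx e_gt0 walk_edge {L_inj} => [|[|//]] _; first by rewrite eqxx.
  by move=> _ _ + /(_ 0%N isT) e0; rewrite edge_probC e0 ltxx.
set N := fun r => (L r).1.
have wrap k : (k < n)%N -> qprob p n.+1 N (k + n.+1) (L k).2 (~~ (L k.+1).2) = 0.
  by move=> lt_kn; rewrite qprob_wrap ?walk_edge.
exists n.+1, N, n, (~~ (L n).2), (L 0%N).2, (fun j => ~~ (L j).2); split => //.
- split; first exact: ge2_n.
  split; first by move=> r1 r2; apply: L_inj.
  move=> r; rewrite ltnS leq_eqVlt => /orP[/eqP -> | lt_rn].
    by rewrite addn1 modnn.
  by rewrite addn1 modn_small //; case/and3P: (wL r lt_rn).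
- split.
  + by rewrite qprobE modn_small // addn1 modnn.
  + by rewrite (_ : n + 1 = 0 + n.+1)%N ?addn1 // wrap // ltnW.
  + move=> j /andP[ge2_j le_jn]; rewrite (_ : n + j = (j - 1) + n.+1)%N; last by lia.
    by rewrite negbK -[in L j](@subnK 1 j) ?addn1 ?wrap //; lia.
  + rewrite (_ : n + n.+1 - 1 = (n - 1) + n.+1)%N ?subSS; last by lia.
    by rewrite -[in L n](@subnK 1 n) ?negbK ?addn1 ?wrap //; lia.
Qed.

Lemma witness_walk_cut L n i j : witness_walk L n -> (i < j <= n)%N -> L i = L j ->
  witness_walk (fun r => if (r <= i)%N then L r else L (r + (j - i))%N) (n - (j - i)).
Proof.
case=> wL neq e_ctx e_gt0 /andP[lt_ij le_jn] Lij.
set L' := fun r => if (r <= i)%N then L r else L (r + (j - i))%N.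
have L'n : L' (n - (j - i))%N = L n.
  rewrite /L'; case: leqP => ?; last by rewrite subnK //; lia.
  have [-> ejn] : (n - (j - i) = i)%N /\ j = n by lia.
  by rewrite Lij ejn.
rewrite /witness_walk L'n; split=> // r lt_r; rewrite /L'.
move: lt_r; case: (ltngtP r i) => [lt_ri | lt_ir | ->] lt_r.
- by apply: wL; lia.
- by rewrite addSn; apply: wL; lia.
- rewrite Lij (_ : i.+1 + (j - i) = j.+1)%N; last by lia.
  by apply: wL; lia.
Qed.

Lemma witness_walk_subloop L n i j : witness_walk L n -> (i < j <= n)%N ->
  L j = negl (L i) -> witness_walk (fun r => L (i + r)%N) (j - i).-1.
Proof.
move=> wLn /andP[lt_ij le_jn] Lji; have [wL _ _ _] := wLn.
apply: loop_witness_walk => [|r lt_r|].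
- by rewrite addn0; apply: supported_walk wL (witness_walk_supported wLn) _; lia.
- by rewrite addnS; apply: wL; lia.
- by rewrite addn0 subnKC // ltnW.
Qed.

(* A repeated variable either repeats a literal, whose loop is cut out, or meets
   its negation, which closes a shorter loop from a supported literal. *)
Lemma witness_walk_cycle L n : witness_walk L n -> cycle_witness.
Proof.
elim/ltn_ind: n L => n IHn L wL.
pose repeated := [exists i : 'I_n.+1, exists j : 'I_n.+1, (i < j)%N && ((L i).1 == (L j).1)].
have [/existsP[[i lt_in] /existsP[[j lt_jn] /andP[/= lt_ij /eqP Lij]]] | /existsPn distinct] :=
  boolP repeated.
  have [Lji | Lji] : L j = L i \/ L j = negl (L i).
    by case: (L i) (L j) Lij => x [] [y []] /= ->; auto.
  - by apply: IHn (witness_walk_cut wL _ (esym Lji)); lia.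
  - by apply: IHn (witness_walk_subloop wL _ Lji); lia.
apply: witness_walk_cycle_distinct wL _ => r1 r2 le_r1 le_r2 L12.
have no_repeat r r' : (r <= n)%N -> (r' <= n)%N -> (r < r')%N -> (L r).1 != (L r').1.
  move=> le_r le_r' lt_rr'.
  have /existsPn/(_ (@Ordinal n.+1 r' le_r')) := distinct (@Ordinal n.+1 r le_r).
  by rewrite /= lt_rr'.
by case: (ltngtP r1 r2) => // [/(no_repeat _ _ le_r1 le_r2) | /(no_repeat _ _ le_r2 le_r1)];
  rewrite L12 eqxx.
Qed.

Section NoWitness.
Hypothesis no_witness : ~ cycle_witness.

Lemma no_supported_loop a : supported a -> ~~ connect forces a (negl a).
Proof.
move=> supp_a; apply/negP => /connect_walk[n [L [L0 Ln wL]]].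
apply/no_witness/(@witness_walk_cycle L n.-1).
by apply: loop_witness_walk; rewrite ?L0 ?Ln.
Qed.

Lemma no_positive_conflict u v c d : u != v -> [set v; u] \in ctx ->
  0 < edge_prob v u d c -> ~~ connect forces (u, c) (v, ~~ d).
Proof.
move=> neq e_ctx e_gt0; apply/negP => /connect_walk[n [L [L0 Ln wL]]].
apply/no_witness/(@witness_walk_cycle L n).
by split; rewrite ?L0 ?Ln ?negbK // eq_sym.
Qed.

Definition admissible (T : {set X * bool}) : Prop :=
  [/\ {in T, forall l, supported l},
      (forall l l', l \in T -> forces l l' -> l' \in T) &
      {in T, forall l, negl l \notin T}].

Lemma admissible_connect T a b :
  admissible T -> a \in T -> connect forces a b -> b \in T.
Proof.
case=> _ T_forces _ aT ab.
exact: (@connect_forward _ forces (fun l => l \in T) T_forces a b ab aT).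
Qed.

Lemma admissible_add T a : admissible T -> supported a -> negl a \notin T ->
  admissible (T :|: [set l | connect forces a l]).
Proof.
move=> admT supp_a naT; have [T_supp T_forces T_cons] := admT.
have reach_out l : connect forces a l -> negl l \notin T.
  by move=> al; apply: contraNN naT => /admissible_connect; apply=> //; apply: connect_negl.
split.
- move=> l; rewrite !inE => /orP[/T_supp // | al].
  exact: supported_connect al supp_a.
- move=> l l'; rewrite !inE => /orP[lT | al] ll'.
    by rewrite (T_forces l).
  by rewrite (connect_trans al (connect1 ll')) orbT.
- move=> l; rewrite !inE negb_or => /orP[lT | al]; apply/andP; split.
  + exact: T_cons.
  + by apply: contraTN lT => /reach_out; rewrite neglK.
  + exact: reach_out.
  + apply: contraNN (no_supported_loop supp_a) => /connect_negl; rewrite neglK.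
    exact: connect_trans al.
Qed.

Lemma admissible_extend T : admissible T -> exists T' (t : {ffun X -> bool}),
  [/\ admissible T', T \subset T' & forall x, (x, t x) \in T'].
Proof.
have [k] := ubnP #|~: T|; elim: k T => // k IHk T ltTk admT.
pose unassigned := [pred z | ((z, true) \notin T) && ((z, false) \notin T)].
case: (pickP unassigned) => [z /andP[ztT zfT] | assigned].
  have z_free c : (z, c) \notin T by case: c.
  have [c supp_zc] := exists_supported z.
  set T1 := T :|: [set l | connect forces (z, c) l].
  have admT1 : admissible T1 by apply: admissible_add; rewrite ?z_free.
  have subT1 : T \subset T1 by apply: subsetUl.
  have ltT1 : T \proper T1.
    by apply/properP; split=> //; exists (z, c); rewrite ?z_free // !inE connect0 orbT.
  have ltT1k : (#|~: T1| < k)%N by apply: leq_trans (proper_card _) ltTk; rewrite properC.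
  have [T' [t [admT' subT' tT']]] := IHk T1 ltT1k admT1.
  by exists T', t; split; rewrite ?(subset_trans subT1).
exists T, [ffun x => (x, true) \in T]; split=> // x; rewrite ffunE.
by case xT : ((x, true) \in T); last by move: (assigned x); rewrite /= xT /= => /negbFE.
Qed.

Lemma admissible_total_gt0 T (t : {ffun X -> bool}) : admissible T ->
  (forall x, (x, t x) \in T) -> forall C, C \in ctx -> 0 < p C (restr C t).
Proof.
move=> [T_supp T_forces T_cons] tT C Cctx.
have [s [sC st ps_gt0]] : exists s,
    [/\ s \in sections C, {in C, forall x, s x = t x} & 0 < p C s]; last first.
  by rewrite (restr_section sC st).
have sizeC := ctx_simple Cctx; move: sizeC Cctx; rewrite leq_eqVlt ltnS leq_eqVlt ltnS leqn0.
case/or3P => [/cards2P[x [y [neq ->]]] | /cards1P[x ->] | /eqP/cards0_eq ->] Cctx.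
- have : ~~ forces (x, t x) (y, ~~ t y).
    by apply/negP => /(T_forces _ _ (tT x)) /T_cons; rewrite /negl /= negbK tT.
  rewrite /forces /= neq Cctx negbK /= => /negbTE ne0.
  have /(edge_prob_gt0P Cctx)[s [sC sx sy ps_gt0]] : 0 < edge_prob x y (t x) (t y).
    by rewrite lt_def ne0 edge_prob_ge0.
  by exists s; split=> // z /set2P[] ->.
- have [s [sC sx ps_gt0]] := T_supp _ (tT x) _ Cctx (set11 x).
  by exists s; split=> // z /set1P ->.
- have [s sC ps_gt0] := exists_section_gt0 Cctx.
  by exists s; split=> // z; rewrite inE.
Qed.

Lemma admissible_section C s : C \in ctx -> s \in sections C -> 0 < p C s ->
  admissible [set l | [exists x in C, connect forces (x, s x) l]].
Proof.
move=> Cctx sC ps_gt0; split.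
- move=> l; rewrite inE => /exists_inP[x xC xl].
  exact: supported_connect xl (supported_section Cctx xC sC ps_gt0).
- move=> l l'; rewrite !inE => /exists_inP[x xC xl] ll'.
  by apply/exists_inP; exists x => //; apply: connect_trans xl (connect1 ll').
move=> l; rewrite !inE => /exists_inP[x xC xl]; apply/exists_inP => -[y yC /connect_negl].
rewrite neglK => /(connect_trans xl) {l xl}.
have [<- | neq] := eqVneq x y.
  exact/negP/no_supported_loop/(supported_section Cctx xC sC ps_gt0).
have EC : C = [set y; x].
  apply/eqP; rewrite eq_sym eqEcard subUset !sub1set xC yC cards2 eq_sym neq.
  exact: ctx_simple.
apply/negP/no_positive_conflict; rewrite -?EC //.
by apply: edge_prob_section_gt0; rewrite -EC.
Qed.

Lemma noncontextual_of_no_witness : logically_noncontextual ctx p.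
Proof.
exists (fun t => [forall C in ctx, 0 < p C (restr C t)]) => C Cctx s sC.
apply/existsP/idP => [[t /andP[/forall_inP/(_ C Cctx) + /eqP <-]] // | ps_gt0].
have [T' [t [admT' subT' tT']]] := admissible_extend (admissible_section Cctx sC ps_gt0).
exists t; apply/andP; split; first exact/forall_inP/(admissible_total_gt0 admT' tT').
apply/eqP/restr_section => // x xC; have [_ _ T'_cons] := admT'.
have xsT' : (x, s x) \in T'.
  by apply: (subsetP subT'); rewrite inE; apply/exists_inP; exists x; rewrite ?connect0.
have := tT' x; have := T'_cons _ xsT'; rewrite /negl /=.
by case: (s x); case: (t x) => // /negP nT /nT.
Qed.

End NoWitness.

Lemma cycle_witness_contextual : cycle_witness -> logically_contextual ctx p.
Proof.
move=> [m [N [i [a [b [alpha [[ge3_m [_ N_edge]] lt_im [q_ab q_b q_mid q_last]]]]]]]].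
move=> [pbar pbarP].
have pbar_gt0 t C : pbar t -> C \in ctx -> 0 < p C (restr C t).
  move=> pt Cctx; rewrite -(pbarP C Cctx _ (restr_sections C t)).
  by apply/existsP; exists t; rewrite pt eqxx.
have edge_ctx r : [set N (r %% m)%N; N ((r + 1) %% m)%N] \in ctx.
  by have := N_edge _ (@ltn_pmod r m (ltnW (ltnW ge3_m))); rewrite modnDml.
rewrite qprobE in q_ab.
have [s [sC sa sb ps_gt0]] := edge_prob_gt0P (edge_ctx i) _ _ q_ab.
move: ps_gt0; rewrite -pbarP ?edge_ctx // => /existsP[t /andP[pt /eqP ts]].
have [g_i g_i1] : t (N (i %% m)%N) = a /\ t (N ((i + 1) %% m)%N) = b.
  by rewrite -sa -sb -ts !ffunE set21 set22.
set g := fun r => t (N (r %% m)%N).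
have g_edge r : qprob p m N r (g r) (g (r + 1)%N) != 0.
  have pt_gt0 := pbar_gt0 _ _ pt (edge_ctx r).
  rewrite qprobE gt_eqF //.
  have := edge_prob_section_gt0 (edge_ctx r) (restr_sections _ t) pt_gt0.
  by rewrite !ffunE set21 set22.
have g_next r x y : qprob p m N r x y = 0 -> g r = x -> g (r + 1)%N = ~~ y.
  by move=> q0 grx; move: (g_edge r); rewrite grx; case: (g _) y q0 => -[] // ->; rewrite eqxx.
have g_chain j : (1 <= j <= m - 2)%N -> g (i + j + 1)%N = ~~ alpha j.
  elim: j => // -[_ _ | j IHj /andP[_ le_j]]; first exact: g_next q_b g_i1.
  apply: g_next (q_mid _ _) _; first by lia.
  rewrite (_ : i + j.+2 = i + j.+1 + 1)%N ?subn1 ?IHj //; lia.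
have g_before_last : g (i + m - 1)%N = ~~ alpha (m - 2)%N.
  by rewrite (_ : i + m - 1 = i + (m - 2) + 1)%N ?g_chain //; lia.
have := g_next _ _ _ q_last g_before_last.
by rewrite subnK /g ?modnDr ?g_i; [case: (a) | lia].
Qed.

End Scenario.

Theorem theorem3 (R : realFieldType) (X : finType) (ctx : {set {set X}})
    (p : {set X} -> {ffun X -> bool} -> R) :
  compat_scenario ctx ->
  simple_scenario ctx ->
  (exists m (N : nat -> X), is_cycle ctx m N) ->
  behavior ctx p ->
  nondisturbing ctx p ->
  (logically_contextual ctx p <->
   exists (m : nat) (N : nat -> X) (i : nat) (a b : bool) (alpha : nat -> bool),
     [/\ is_cycle ctx m N, (i < m)%N &
        [/\ 0 < qprob p m N i a b,
         qprob p m N (i + 1) b (alpha 1%N) = 0,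
         (forall j, (2 <= j <= m - 2)%N ->
            qprob p m N (i + j) (~~ alpha (j - 1)%N) (alpha j) = 0) &
         qprob p m N (i + m - 1) (~~ alpha (m - 2)%N) a = 0]]).
Proof.
move=> _ ctx_simple _ p_behavior p_nondisturbing; split; last first.
  exact: cycle_witness_contextual.
move=> contextual; apply: NNPP => no_witness; apply: contextual.
exact: noncontextual_of_no_witness no_witness.
Qed.
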